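(* For every countable two-sorted ultrametric space $X$ there is a topological group embedding $\mathrm{Aut}(X)\to\mathrm{Aut}(\mathbb U)$.
   Context: A two-sorted ultrametric space is $(X,d_X,D_X)$ with $D_X$ a linear order with least element $0$, $d_X\colon X\times X\to D_X$ symmetric, $d_X(x,y)=0\iff x=y$, $d_X(x,z)\le\max\{d_X(x,y),d_X(y,z)\}$; countable if both $X$ and $D_X$ are countable. $\mathrm{Aut}(X)$ is the group of dc-automorphisms (bijections $f$ of $X$ with an order automorphism $D_f$ of $D_X$ with $d(f(x),f(y))=D_f(d(x,y))$) with the topology of pointwise convergence on both sorts (both viewed as discrete). $\mathbb U$ is the countable rational Urysohn ultrametric space viewed as a two-sorted space with distance set $\mathbb Q_{\ge0}$ (equivalently the Fraïssé limit of finite two-sorted ultrametric spaces with dc-embeddings). *)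

From mathcomp Require Import all_boot all_order all_algebra.
Set Implicit Arguments. Unset Strict Implicit. Unset Printing Implicit Defensive.
Import Order.TTheory GRing.Theory Num.Theory.
Local Open Scope ring_scope.

(* membership in a list, for arbitrary (not necessarily eqType) carriers *)
Fixpoint lmem (T : Type) (x : T) (s : seq T) : Prop :=
  match s with nil => False | y :: s' => y = x \/ lmem x s' end.

(* Two-sorted ultrametric space (X, d_X, D_X): D_X a linear order with least
   element 0, d symmetric, d x y = 0 <-> x = y, d x z <= max (d x y) (d y z)
   (in a linear order: d x z <= d x y  or  d x z <= d y z). *)
Record TSUM := {
  pt : Type;
  dst : Type;
  dle : dst -> dst -> Prop;
  d0 : dst;
  dist : pt -> pt -> dst;
  dle_refl : forall a, dle a a;
  dle_antisym : forall a b, dle a b -> dle b a -> a = b;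
  dle_trans : forall a b c, dle a b -> dle b c -> dle a c;
  dle_total : forall a b, dle a b \/ dle b a;
  d0_least : forall a, dle d0 a;
  dist_sym : forall x y, dist x y = dist y x;
  dist_eq0 : forall x y, dist x y = d0 <-> x = y;
  dist_ultra : forall x y z, dle (dist x z) (dist x y) \/ dle (dist x z) (dist y z)
}.

Definition countable_TSUM (X : TSUM) : Prop :=
  (exists e : pt X -> nat, injective e) /\ (exists e : dst X -> nat, injective e).

Record dcAut (X : TSUM) := {
  af : pt X -> pt X;
  ad : dst X -> dst X;
  af_bij : bijective af;
  ad_bij : bijective ad;
  ad_order : forall a b, dle a b <-> dle (ad a) (ad b);
  af_dist : forall x y, dist (af x) (af y) = ad (dist x y)
}.

Definition aut_eq (X : TSUM) (p q : dcAut X) : Prop :=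
  af p =1 af q /\ ad p =1 ad q.

(* basic neighbourhoods of the topology of pointwise convergence on both
   (discrete) sorts: agreement on finite sets of points and of distances *)
Definition agree (X : TSUM) (F : seq (pt X)) (E : seq (dst X)) (p q : dcAut X) : Prop :=
  (forall x, lmem x F -> af p x = af q x) /\ (forall a, lmem a E -> ad p a = ad q a).

Definition aut_hom (X Y : TSUM) (Phi : dcAut X -> dcAut Y) : Prop :=
  forall p q r : dcAut X,
    af r =1 af p \o af q -> ad r =1 ad p \o ad q ->
    af (Phi r) =1 af (Phi p) \o af (Phi q) /\ ad (Phi r) =1 ad (Phi p) \o ad (Phi q).

Definition aut_continuous (X Y : TSUM) (Phi : dcAut X -> dcAut Y) : Prop :=
  forall (p : dcAut X) (F : seq (pt Y)) (E : seq (dst Y)),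
    exists (F' : seq (pt X)) (E' : seq (dst X)),
      forall q, agree F' E' p q -> agree F E (Phi p) (Phi q).

(* Phi is a homeomorphism onto its image (subspace topology) *)
Definition aut_open_onto_image (X Y : TSUM) (Phi : dcAut X -> dcAut Y) : Prop :=
  forall (p : dcAut X) (F' : seq (pt X)) (E' : seq (dst X)),
    exists (F : seq (pt Y)) (E : seq (dst Y)),
      forall q, agree F E (Phi p) (Phi q) -> agree F' E' p q.

Definition top_group_embedding (X Y : TSUM) (Phi : dcAut X -> dcAut Y) : Prop :=
  [/\ aut_hom Phi,
      (forall p q, aut_eq (Phi p) (Phi q) -> aut_eq p q),
      aut_continuous Phi &
      aut_open_onto_image Phi].

(* The countable rational Urysohn ultrametric space: a countable ultrametric
   space with rational distances having the one-point extension property for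
   finite subsets (this characterizes it up to isometry). *)
Record RUU := {
  upt : Type;
  ud : upt -> upt -> rat;
  upt_countable : exists e : upt -> nat, injective e;
  ud_ge0 : forall x y, 0 <= ud x y;
  ud_eq0 : forall x y, ud x y = 0 <-> x = y;
  ud_sym : forall x y, ud x y = ud y x;
  ud_ultra : forall x y z, ud x z <= Num.max (ud x y) (ud y z);
  ud_ext : forall (A : seq upt) (r : upt -> rat),
      (forall a, lmem a A -> 0 < r a) ->
      (forall a b, lmem a A -> lmem b A -> ud a b <= Num.max (r a) (r b)) ->
      (forall a b, lmem a A -> lmem b A -> r a <= Num.max (ud a b) (r b)) ->
      exists z, forall a, lmem a A -> ud z a = r a
}.

Definition Qnn := {q : rat | 0 <= q}.

Definition Qnn0 : Qnn := exist (fun q : rat => is_true (0 <= q)) 0 (lexx 0).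

Definition RUU_dist (U : RUU) (x y : upt U) : Qnn :=
  exist (fun q : rat => is_true (0 <= q)) (ud x y) (ud_ge0 x y).

Definition Qnn_le (a b : Qnn) : Prop := proj1_sig a <= proj1_sig b.

Lemma Qnn_eq (a b : Qnn) : proj1_sig a = proj1_sig b -> a = b.
Proof.
case: a b => a Ha [b Hb] /= E; subst b; congr exist; exact: bool_irrelevance.
Qed.

Definition RUU_TSUM (U : RUU) : TSUM.
Proof.
refine (@Build_TSUM (upt U) Qnn Qnn_le Qnn0 (@RUU_dist U) _ _ _ _ _ _ _ _).
- by move=> a; rewrite /Qnn_le lexx.
- move=> a b; rewrite /Qnn_le => H1 H2; apply: Qnn_eq; apply/eqP.
  by rewrite eq_le H1 H2.
- by move=> a b c; rewrite /Qnn_le; apply: le_trans.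
- by move=> a b; rewrite /Qnn_le; case: (leP (proj1_sig a) (proj1_sig b)) => H;
    [left|right; exact: ltW].
- by case=> a Ha; rewrite /Qnn_le.
- by move=> x y; apply: Qnn_eq; rewrite /= ud_sym.
- move=> x y; split.
  + by move=> H; apply/ud_eq0; move: (f_equal (@proj1_sig _ _) H).
  + by move=> H; apply: Qnn_eq => /=; apply/ud_eq0.
- move=> x y z; rewrite /Qnn_le /=; have := @ud_ultra U x y z.
  by rewrite le_max => /orP[]; [left|right].
Defined.

From mathcomp Require Import all_boot all_order all_algebra.
From Stdlib Require Import Classical ClassicalEpsilon.
Set Implicit Arguments. Unset Strict Implicit. Unset Printing Implicit Defensive.
Import Order.TTheory GRing.Theory Num.Theory.
Local Open Scope ring_scope.

(* Aut(X) acts faithfully on the countable set X + D_X, and the topology of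
   pointwise convergence on both sorts is the one induced from the symmetric
   group of X + D_X; coding X + D_X into the naturals embeds Aut(X) into
   Sym(N).  Sym(N) in turn embeds into the isometry group of U: the one-point
   extension property gives points c_n at mutual distance 1, whose open unit
   balls are pairwise at distance 1 and, by back-and-forth, all isometric to
   the ball around c_0.  A permutation s then moves the ball around c_n onto
   the ball around c_(s n) and fixes every point outside the balls; this is
   an isometry of U, acting trivially on distances, and s is recovered from
   the images of the centres. *)

Lemma lmem_map (A B : Type) (f : A -> B) (b : B) (s : seq A) :
  lmem b (map f s) <-> exists2 a, lmem a s & f a = b.
Proof.
elim: s => [|a s IH] /=; first by split=> [[]|[]].
split=> [[<-|/IH[a' Ha' <-]]|[a' [<-|Ha'] fa']].
- by exists a; [left|].
- by exists a'; [right|].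
- by left.
- by right; apply/IH; exists a'.
Qed.

Lemma lmem_cat (A : Type) (a : A) (s1 s2 : seq A) :
  lmem a (s1 ++ s2) <-> lmem a s1 \/ lmem a s2.
Proof. by elim: s1 => [|b s IH] /=; [tauto | rewrite IH; tauto]. Qed.

Definition enumerates (T : Type) (en : nat -> T) (S : T -> Prop) : Prop :=
  (forall n, S (en n)) /\ (forall s, S s -> exists n, en n = s).

Lemma countable_enumerates (T : Type) (e : T -> nat) (S : T -> Prop) (s0 : T) :
  injective e -> S s0 -> exists en : nat -> T, enumerates en S.
Proof.
move=> e_inj Ss0.
pose P n s := S s /\ ((exists2 s', S s' & e s' = n) -> e s = n).
have enP n : P n (epsilon (inhabits s0) (P n)).
  apply: epsilon_spec; have [[s Ss Es]|none] := classic (exists2 s', S s' & e s' = n).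
    by exists s.
  by exists s0; split.
exists (fun n => epsilon (inhabits s0) (P n)); split=> [n|s Ss]; first exact: (enP n).1.
by exists (e s); apply: e_inj; apply: (enP _).2; exists s.
Qed.

Lemma inj_sum_nat (A B : Type) (f : A -> nat) (g : B -> nat) :
  injective f -> injective g -> exists h : A + B -> nat, injective h.
Proof.
move=> f_inj g_inj.
exists (fun y => match y with inl a => (f a).*2 | inr b => (g b).*2.+1 end).
case=> [a|b] [a'|b'] /= E.
- by rewrite (f_inj _ _ (double_inj E)).
- by have := congr1 odd E; rewrite /= !odd_double.
- by have := congr1 odd E; rewrite /= !odd_double.
- by rewrite (g_inj _ _ (double_inj (succn_inj E))).
Qed.

Definition isometry_between (P D : Type) (d : P -> P -> D) (A B : P -> Prop)
    (h k : P -> P) : Prop :=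
  [/\ forall a, A a -> B (h a) /\ k (h a) = a,
      forall b, B b -> A (k b) /\ h (k b) = b &
      forall a a', A a -> A a' -> d (h a) (h a') = d a a'].

Lemma isometry_between_inv (P D : Type) (d : P -> P -> D) A B h k b b' :
  isometry_between d A B h k -> B b -> B b' -> d (k b) (k b') = d b b'.
Proof.
case=> _ hk hd Bb Bb'; have [Ab Eb] := hk b Bb; have [Ab' Eb'] := hk b' Bb'.
by rewrite -{2}Eb -{2}Eb' hd.
Qed.

Section BackAndForth.
Variables (P D : Type) (d : P -> P -> D) (d0 : D).
Hypothesis d_sym : forall x y, d x y = d y x.
Hypothesis d_eq0 : forall x y, d x y = d0 <-> x = y.
Variables A B : P -> Prop.

Definition partial_iso (l : seq (P * P)) : Prop :=
  (forall ab, lmem ab l -> A ab.1 /\ B ab.2) /\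
  (forall ab ab', lmem ab l -> lmem ab' l -> d ab.1 ab'.1 = d ab.2 ab'.2).

Lemma partial_iso_cons l x y : partial_iso l -> A x -> B y ->
  (forall ab, lmem ab l -> d x ab.1 = d y ab.2) -> partial_iso ((x, y) :: l).
Proof.
move=> [l_in l_dist] Ax By dxy; have dxx z : d z z = d0 by apply/d_eq0.
split=> [ab [<-|/l_in]|ab ab' [<-|Hab] [<-|Hab']] //=; rewrite ?dxx ?dxy //.
- by rewrite d_sym dxy // d_sym.
- exact: l_dist.
Qed.

Hypothesis forth : forall l x, partial_iso l -> A x -> exists y, partial_iso ((x, y) :: l).
Hypothesis back : forall l y, partial_iso l -> B y -> exists x, partial_iso ((x, y) :: l).
Variables enumA enumB : nat -> P.
Hypotheses (enumA_A : enumerates enumA A) (enumB_B : enumerates enumB B).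

Definition add_forth l x :=
  (x, epsilon (inhabits x) (fun y => partial_iso ((x, y) :: l))) :: l.

Definition add_back l y :=
  (epsilon (inhabits y) (fun x => partial_iso ((x, y) :: l)), y) :: l.

Fixpoint chain n : seq (P * P) :=
  if n is n'.+1 then add_back (add_forth (chain n') (enumA n')) (enumB n') else [::].

Lemma partial_iso_add_forth l x : partial_iso l -> A x -> partial_iso (add_forth l x).
Proof.
move=> iso_l Ax; apply: (epsilon_spec _ (fun y => partial_iso ((x, y) :: l))).
exact: forth.
Qed.

Lemma partial_iso_add_back l y : partial_iso l -> B y -> partial_iso (add_back l y).
Proof.
move=> iso_l By; apply: (epsilon_spec _ (fun x => partial_iso ((x, y) :: l))).
exact: back.
Qed.

Lemma partial_iso_chain n : partial_iso (chain n).
Proof.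
elim: n => [|n IH] /=; first by split=> [ab|ab ab'] [].
apply: partial_iso_add_back (proj1 enumB_B n).
exact: partial_iso_add_forth (proj1 enumA_A n).
Qed.

Lemma chain_mono m n ab : (m <= n)%N -> lmem ab (chain m) -> lmem ab (chain n).
Proof.
elim: n => [|n IH]; first by rewrite leqn0 => /eqP ->.
by rewrite leq_eqVlt ltnS => /orP[/eqP -> //|/IH H /H]; right; right.
Qed.

Definition related a b := exists n, lmem (a, b) (chain n).

Lemma related_dist a b a' b' : related a b -> related a' b' -> d a a' = d b b'.
Proof.
move=> [m Hm] [n Hn]; apply: (proj2 (partial_iso_chain (maxn m n)) (a, b) (a', b')).
- exact: chain_mono (leq_maxl m n) Hm.
- exact: chain_mono (leq_maxr m n) Hn.
Qed.

Lemma related_in a b : related a b -> A a /\ B b.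
Proof. by case=> n /(proj1 (partial_iso_chain n)). Qed.

Lemma related_total a : A a -> exists b, related a b.
Proof. by case/(proj2 enumA_A)=> n <-; eexists; exists n.+1; right; left. Qed.

Lemma related_onto b : B b -> exists a, related a b.
Proof. by case/(proj2 enumB_B)=> n <-; eexists; exists n.+1; left. Qed.

Lemma related_eq a b a' b' : related a b -> related a' b' -> (a = a' <-> b = b').
Proof. by move=> H H'; rewrite -d_eq0 (related_dist H H') d_eq0. Qed.

Theorem back_and_forth : exists h k, isometry_between d A B h k.
Proof.
pose h a := epsilon (inhabits a) (related a).
pose k b := epsilon (inhabits b) (fun a => related a b).
have hP a : A a -> related a (h a) by move/related_total; apply: epsilon_spec.
have kP b : B b -> related (k b) b by move/related_onto; apply: epsilon_spec.
exists h, k; split=> [a Aa|b Bb|a a' Aa Aa'].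
- have [_ Bh] := related_in (hP a Aa).
  by split=> //; apply/(related_eq (kP _ Bh) (hP a Aa)).
- have [Ak _] := related_in (kP b Bb).
  by split=> //; apply/(related_eq (hP _ Ak) (kP b Bb)).
- by rewrite (related_dist (hP a Aa) (hP a' Aa')).
Qed.

End BackAndForth.

Lemma partial_iso_swap (P D : Type) (d : P -> P -> D) A B l :
  partial_iso d A B l -> partial_iso d B A (map swap_pair l).
Proof.
move=> [l_in l_dist]; split=> [ab|ab ab'] /lmem_map[[x y] Hxy <-] /=.
  by have [] := l_in _ Hxy.
by move=> /lmem_map[[x' y'] Hxy' <-]; rewrite (l_dist _ _ Hxy Hxy').
Qed.

Section Ultrametric.
Variable U : RUU.
Local Notation P := (upt U).
Local Notation d := (@ud U).

Lemma ud_xx x : d x x = 0.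
Proof. exact/ud_eq0. Qed.

Lemma ud_le x y z r : d x y <= r -> d y z <= r -> d x z <= r.
Proof. by move=> xy yz; apply: le_trans (ud_ultra x y z) _; rewrite ge_max xy yz. Qed.

Lemma ud_lt x y z r : d x y < r -> d y z < r -> d x z < r.
Proof. by move=> xy yz; apply: le_lt_trans (ud_ultra x y z) _; rewrite gt_max xy yz. Qed.

Lemma ud_isosceles x y z : d x y < d x z -> d y z = d x z.
Proof.
move=> xy_xz; apply/eqP; rewrite eq_le; apply/andP; split.
  by apply: ud_le (ltW _) (lexx _); rewrite ud_sym.
rewrite leNgt; apply/negP => yz; move: (ud_lt xy_xz yz).
by rewrite ltxx.
Qed.

Lemma ud_eq_of_le x x' z : d x x' <= d x z -> d x x' <= d x' z -> d x z = d x' z.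
Proof.
move=> le_xz le_x'z; apply/eqP; rewrite eq_le.
rewrite (le_trans (ud_ultra x x' z)) ?ge_max ?le_x'z //=.
by rewrite (le_trans (ud_ultra x' x z)) // ge_max lexx ud_sym le_xz.
Qed.

Definition ball (u : P) (r : rat) (a : P) : Prop := d a u < r.

Lemma ball_center u r : 0 < r -> ball u r u.
Proof. by rewrite /ball ud_xx. Qed.

Lemma ball_extend_forth u v r l x :
  partial_iso d (ball u r) (ball v r) l -> ball u r x ->
  exists y, partial_iso d (ball u r) (ball v r) ((x, y) :: l).
Proof.
move=> iso_l ux; have [l_in l_dist] := iso_l.
suff [y vy dxy] : exists2 y, ball v r y & forall ab, lmem ab l -> d x ab.1 = d y ab.2.
  by exists y; apply: (partial_iso_cons (@ud_sym U) (@ud_eq0 U)).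
(* [ud_ext] needs positive radii, so a point already in the domain of [l] is
   handled separately. *)
have [[ab Hab <-]|x_new] := classic (exists2 ab, lmem ab l & ab.1 = x).
  by exists ab.2; [exact: (l_in _ Hab).2 | move=> ab'; apply: l_dist].
have [[ab0 Hab0]|l_nil] := classic (exists ab0, lmem ab0 l); last first.
  exists v => [|ab Hab]; last by case: l_nil; exists ab.
  by apply: ball_center; apply: le_lt_trans (ud_ge0 _ _) ux.
pose partner b := epsilon (inhabits b) (fun a => lmem (a, b) l).
have partnerE ab : lmem ab l -> partner ab.2 = ab.1.
  move=> Hab; have Hp : lmem (partner ab.2, ab.2) l.
    by apply: (epsilon_spec _ (fun a => lmem (a, ab.2) l)); exists ab.1; case: ab Hab.
  by have := l_dist _ _ Hp Hab; rewrite /= ud_xx => /ud_eq0.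
have [z Hz] : exists z, forall b, lmem b (map snd l) -> d z b = d x (partner b).
  apply: ud_ext => [b|b b'|b b'] /lmem_map[ab Hab <-]; rewrite ?partnerE //.
  - rewrite lt_def ud_ge0 andbT; apply/eqP => /ud_eq0 xab.
    by apply: x_new; exists ab.
  - move=> /lmem_map[ab' Hab' <-]; rewrite partnerE // -l_dist //.
    by rewrite (ud_sym x); apply: ud_ultra.
  - move=> /lmem_map[ab' Hab' <-]; rewrite partnerE // -l_dist // maxC.
    by rewrite (ud_sym ab.1); apply: ud_ultra.
have zE ab : lmem ab l -> d z ab.2 = d x ab.1.
  by move=> Hab; rewrite Hz ?partnerE //; apply/lmem_map; exists ab.
have [u_ab0 v_ab0] := l_in _ Hab0.
exists z => [|ab Hab]; last by rewrite zE.
rewrite /ball in v_ab0 *; apply: ud_lt v_ab0.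
by rewrite zE //; apply: (ud_lt ux); rewrite ud_sym.
Qed.

Lemma balls_isometric u v r : 0 < r ->
  exists h k, isometry_between d (ball u r) (ball v r) h k.
Proof.
move=> r_gt0; have [e e_inj] := upt_countable U.
have [enu enu_ball] := countable_enumerates e_inj (ball_center u r_gt0).
have [env env_ball] := countable_enumerates e_inj (ball_center v r_gt0).
apply: (back_and_forth (@ud_eq0 U) _ _ enu_ball env_ball).
  exact: ball_extend_forth.
move=> l y iso_l vy; have [x iso_yx] := ball_extend_forth (partial_iso_swap iso_l) vy.
by exists x; move: (partial_iso_swap iso_yx); rewrite /= (mapK swap_pairK).
Qed.

Lemma exists_unit_separated :
  exists c : nat -> P, forall i j, i <> j -> d (c i) (c j) = 1.
Proof.
have [p0 _] := @ud_ext U [::] (fun _ => 1) (fun _ => False_ind _)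
  (fun _ _ => False_ind _) (fun _ _ => False_ind _).
pose unit_far (s : seq P) z := forall a, lmem a s -> d z a = 1.
pose next s := epsilon (inhabits p0) (unit_far s).
pose fix pts n := if n is n'.+1 then next (pts n') :: pts n' else [::].
have next_far s : (forall a b, lmem a s -> lmem b s -> d a b <= 1) -> unit_far s (next s).
  move=> s_le1; apply: epsilon_spec; apply: ud_ext => [a _|a b|a b _ _].
  - exact: ltr01.
  - by rewrite maxxx; apply: s_le1.
  - by rewrite le_max lexx orbT.
have pts_le1 n a b : lmem a (pts n) -> lmem b (pts n) -> d a b <= 1.
  elim: n a b => [|n IH] a b //=; have far := next_far _ IH.
  case=> [<-|Ha] [<-|Hb]; last exact: IH.
  - by rewrite ud_xx ler01.
  - by rewrite far.
  - by rewrite ud_sym far.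
have pts_mem i n : (i < n)%N -> lmem (next (pts i)) (pts n).
  by elim: n => // n IH; rewrite ltnS leq_eqVlt => /orP[/eqP->|/IH]; [left|right].
have far_lt i j : (i < j)%N -> d (next (pts j)) (next (pts i)) = 1.
  by move=> ij; apply: (next_far _ (pts_le1 j)); apply: pts_mem.
exists (fun n => next (pts n)) => i j.
by case: (ltngtP i j) => // ij _; [rewrite ud_sym|]; apply: far_lt.
Qed.
End Ultrametric.

Section Transport.
Variables (T : Type) (e : T -> nat).
Hypothesis e_inj : injective e.

Definition transport_at (f : T -> T) (n m : nat) : Prop :=
  (forall y, e y = n -> m = e (f y)) /\ ((forall y, e y <> n) -> m = n).

Definition transport (f : T -> T) (n : nat) : nat :=
  epsilon (inhabits n) (transport_at f n).

Lemma range_cases n : (exists y, e y = n) \/ (forall y, e y <> n).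
Proof. by have [|/not_ex_all_not] := classic (exists y, e y = n); [left | right]. Qed.

Lemma transport_spec f n : transport_at f n (transport f n).
Proof.
apply: epsilon_spec; case: (range_cases n) => [[y0 <-]|out].
  by exists (e (f y0)); split=> [y /e_inj ->|/(_ y0)].
by exists n; split=> // y /out.
Qed.

Lemma transportE f y : transport f (e y) = e (f y).
Proof. exact: (transport_spec f (e y)).1 y erefl. Qed.

Lemma transport_out f n : (forall y, e y <> n) -> transport f n = n.
Proof. exact: (transport_spec f n).2. Qed.

Lemma transport_comp f f' n : transport (f \o f') n = transport f (transport f' n).
Proof. by case: (range_cases n) => [[y <-]|out]; rewrite ?transportE ?transport_out. Qed.

Lemma eq_transport f f' : f =1 f' -> transport f =1 transport f'.
Proof.
by move=> E n; case: (range_cases n) => [[y <-]|out]; rewrite ?transportE ?E ?transport_out.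
Qed.

Lemma transport_id n : transport id n = n.
Proof. by case: (range_cases n) => [[y <-]|out]; rewrite ?transportE ?transport_out. Qed.

Lemma transport_bij f : bijective f -> bijective (transport f).
Proof.
case=> f' fK f'K; exists (transport f') => n.
- by rewrite -transport_comp (eq_transport (f' := id) fK) transport_id.
- by rewrite -transport_comp (eq_transport (f' := id) f'K) transport_id.
Qed.

End Transport.

Section Spread.
Variables (U : RUU) (c : nat -> upt U) (hh kk : nat -> upt U -> upt U).
Local Notation P := (upt U).
Local Notation d := (@ud U).
Local Notation B n := (ball (c n) 1).
Hypothesis c_sep : forall i j, i <> j -> d (c i) (c j) = 1.
Hypothesis hk_iso : forall n, isometry_between d (B 0%N) (B n) (hh n) (kk n).

Lemma c_dist_le1 i j : d (c i) (c j) <= 1.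
Proof. by case: (eqVneq i j) => [->|/eqP/c_sep ->]; rewrite ?ud_xx ?ler01 ?lexx. Qed.

Lemma center_ball n : B n (c n).
Proof. exact: ball_center ltr01. Qed.

Lemma ball_index_unique n m y : B n y -> B m y -> n = m.
Proof.
move=> Hn Hm; apply: NNPP => /c_sep nm.
have : d (c n) (c m) < 1 by apply: ud_lt Hm; rewrite ud_sym.
by rewrite nm ltxx.
Qed.

Lemma balls_apart n m y z : B n y -> B m z -> n <> m -> d y z = 1.
Proof.
move=> Hy Hz /c_sep nm.
have cmy : d (c m) y = 1 by rewrite ud_sym -nm; apply: ud_isosceles; rewrite nm ud_sym.
by rewrite ud_sym -cmy; apply: ud_isosceles; rewrite cmy ud_sym.
Qed.

Lemma dist_outside n y z : B n y -> (forall m, ~ B m z) -> d y z = d (c 0%N) z.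
Proof.
move=> Hy Hz; have ge1 m : 1 <= d (c m) z.
  by rewrite leNgt ud_sym; apply/negP; exact: Hz.
have -> : d y z = d (c n) z.
  by apply: ud_isosceles; rewrite ud_sym; apply: lt_le_trans Hy (ge1 n).
by apply: ud_eq_of_le; apply: le_trans (c_dist_le1 _ _) (ge1 _).
Qed.

Lemma ball_cases y : (exists n, B n y) \/ (forall n, ~ B n y).
Proof. by have [|/not_ex_all_not] := classic (exists n, B n y); [left | right]. Qed.

Definition ball_index (y : P) : nat := epsilon (inhabits 0%N) (fun n => B n y).

Lemma ball_indexE n y : B n y -> ball_index y = n.
Proof.
move=> Hy; apply: (ball_index_unique _ Hy).
by apply: (epsilon_spec _ (fun m => B m y)); exists n.
Qed.

Definition spread (s : nat -> nat) (y : P) : P :=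
  let n := ball_index y in
  if excluded_middle_informative (B n y) then hh (s n) (kk n y) else y.

Lemma spread_in s n y : B n y -> spread s y = hh (s n) (kk n y).
Proof.
by move=> Hy; rewrite /spread (ball_indexE Hy); case: excluded_middle_informative.
Qed.

Lemma spread_out s y : (forall n, ~ B n y) -> spread s y = y.
Proof.
move=> Hy; rewrite /spread.
by case: excluded_middle_informative => // H; case: (Hy _ H).
Qed.

Lemma spread_ball s n y : B n y -> B (s n) (spread s y).
Proof.
move=> Hy; have [_ kB _] := hk_iso n; have [hB _ _] := hk_iso (s n).
by rewrite (spread_in s Hy); apply: (hB _ (kB _ Hy).1).1.
Qed.

Lemma spread_comp s t y : spread (s \o t) y = spread s (spread t y).
Proof.
have [[n Hy]|out] := ball_cases y; last by rewrite !spread_out.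
rewrite (spread_in s (spread_ball t Hy)) !(spread_in _ Hy) /=.
have [_ kB _] := hk_iso n; have [hB _ _] := hk_iso (t n).
by rewrite (hB _ (kB _ Hy).1).2.
Qed.

Lemma spread_id y : spread id y = y.
Proof.
have [[n Hy]|out] := ball_cases y; last by rewrite spread_out.
by have [_ kB _] := hk_iso n; rewrite (spread_in _ Hy) (kB _ Hy).2.
Qed.

Lemma eq_spread s t : s =1 t -> spread s =1 spread t.
Proof. by move=> E y; rewrite /spread E. Qed.

Lemma spread_bij s : bijective s -> bijective (spread s).
Proof.
case=> s' sK s'K; exists (spread s') => y.
- by rewrite -spread_comp (eq_spread (t := id) sK) spread_id.
- by rewrite -spread_comp (eq_spread (t := id) s'K) spread_id.
Qed.

Lemma spread_dist s : injective s -> forall y z, d (spread s y) (spread s z) = d y z.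
Proof.
move=> s_inj y z.
have [[n Hy]|y_out] := ball_cases y; have [[m Hz]|z_out] := ball_cases z.
- case: (eqVneq n m) => [nm|/eqP nm]; last first.
    rewrite (balls_apart Hy Hz nm).
    by apply: balls_apart (spread_ball s Hy) (spread_ball s Hz) _ => /s_inj.
  subst m; rewrite (spread_in s Hy) (spread_in s Hz).
  have [_ kB _] := hk_iso n; have [_ _ hd] := hk_iso (s n).
  rewrite hd; first exact: (isometry_between_inv (hk_iso n)).
  + exact: (kB _ Hy).1.
  + exact: (kB _ Hz).1.
- rewrite (spread_out s z_out) (dist_outside (spread_ball s Hy) z_out).
  by rewrite (dist_outside Hy z_out).
- rewrite (spread_out s y_out) !(ud_sym y) (dist_outside (spread_ball s Hz) y_out).
  by rewrite (dist_outside Hz y_out).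
- by rewrite !spread_out.
Qed.

Lemma spread_center_inj s t n : spread s (c n) = spread t (c n) -> s n = t n.
Proof.
move=> E; apply: (ball_index_unique (spread_ball s (center_ball n))).
by rewrite E; apply: spread_ball (center_ball n).
Qed.

Lemma spread_local s t n y : B n y -> s n = t n -> spread s y = spread t y.
Proof. by move=> Hy E; rewrite !(spread_in _ Hy) E. Qed.

Section Embedding.
Variables (X : TSUM) (e : pt X + dst X -> nat).
Hypothesis e_inj : injective e.

Definition sum_act (p : dcAut X) (y : pt X + dst X) : pt X + dst X :=
  match y with inl x => inl (af p x) | inr a => inr (ad p a) end.

Lemma sum_act_bij p : bijective (sum_act p).
Proof.
case: (af_bij p) => f fK f'K; case: (ad_bij p) => g gK g'K.
exists (fun y => match y with inl x => inl (f x) | inr a => inr (g a) end).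
  by case=> [x|a] /=; rewrite ?fK ?gK.
by case=> [x|a] /=; rewrite ?f'K ?g'K.
Qed.

Definition code_perm (p : dcAut X) : nat -> nat := transport e (sum_act p).

Lemma code_perm_bij p : bijective (code_perm p).
Proof. exact: (transport_bij e_inj (sum_act_bij p)). Qed.

Lemma code_perm_pt p x : code_perm p (e (inl x)) = e (inl (af p x)).
Proof. exact: transportE. Qed.

Lemma code_perm_dst p a : code_perm p (e (inr a)) = e (inr (ad p a)).
Proof. exact: transportE. Qed.

Lemma induced_aut_dist p x y :
  RUU_dist (spread (code_perm p) x) (spread (code_perm p) y) = id (RUU_dist x y).
Proof. by apply: Qnn_eq => /=; apply: (spread_dist (bij_inj (code_perm_bij p))). Qed.

Definition induced_aut (p : dcAut X) : dcAut (RUU_TSUM U) :=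
  @Build_dcAut (RUU_TSUM U) (spread (code_perm p)) id
    (spread_bij (code_perm_bij p)) (inv_bij (fun _ => erefl)) (fun _ _ => iff_refl _)
    (@induced_aut_dist p).

Lemma induced_aut_hom : aut_hom induced_aut.
Proof.
move=> p q r Hf Hd; split=> // y /=.
rewrite -spread_comp; apply: eq_spread => n /=.
rewrite /code_perm -(transport_comp e_inj); apply: (eq_transport e_inj) => -[x|a] /=.
- by rewrite Hf.
- by rewrite Hd.
Qed.

Lemma induced_aut_center_pt p q x :
  af (induced_aut p) (c (e (inl x))) = af (induced_aut q) (c (e (inl x))) -> af p x = af q x.
Proof. by move/spread_center_inj; rewrite !code_perm_pt => /e_inj[]. Qed.

Lemma induced_aut_center_dst p q a :
  af (induced_aut p) (c (e (inr a))) = af (induced_aut q) (c (e (inr a))) -> ad p a = ad q a.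
Proof. by move/spread_center_inj; rewrite !code_perm_dst => /e_inj[]. Qed.

Lemma induced_aut_inj p q : aut_eq (induced_aut p) (induced_aut q) -> aut_eq p q.
Proof.
by case=> E _; split=> [x|a]; [apply: induced_aut_center_pt | apply: induced_aut_center_dst].
Qed.

Lemma code_perm_local p n :
  exists F E, forall q, agree F E p q -> code_perm p n = code_perm q n.
Proof.
case: (range_cases e n) => [[[x|a] <-]|out].
- by exists [:: x], [::] => q [Fx _]; rewrite !code_perm_pt Fx //; left.
- by exists [::], [:: a] => q [_ Ea]; rewrite !code_perm_dst Ea //; left.
- by exists [::], [::] => q _; rewrite /code_perm !(transport_out e_inj).
Qed.

Lemma induced_aut_local p y :
  exists F E, forall q, agree F E p q -> af (induced_aut p) y = af (induced_aut q) y.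
Proof.
have [[n Hy]|out] := ball_cases y.
  have [F [E pq_n]] := code_perm_local p n.
  by exists F, E => q /pq_n; apply: spread_local Hy.
by exists [::], [::] => q _; rewrite /= !spread_out.
Qed.

Lemma agree_cat F1 F2 E1 E2 (p q : dcAut X) :
  agree (F1 ++ F2) (E1 ++ E2) p q -> agree F1 E1 p q /\ agree F2 E2 p q.
Proof.
case=> HF HE; split; split=> z Hz; [apply: HF | apply: HE | apply: HF | apply: HE];
  by apply/lmem_cat; tauto.
Qed.

Lemma induced_aut_cont : aut_continuous induced_aut.
Proof.
move=> p F E.
suff [F' [E' HF]] : exists F' E', forall q, agree F' E' p q ->
    forall y, lmem y F -> af (induced_aut p) y = af (induced_aut q) y.
  by exists F', E' => q /HF.
elim: F => [|y F [F' [E' IH]]]; first by exists [::], [::].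
have [Fy [Ey Hy]] := induced_aut_local p y.
exists (Fy ++ F'), (Ey ++ E') => q /agree_cat[/Hy pq_y /IH pq_F] z [<-|/pq_F] //.
Qed.

Lemma induced_aut_open : aut_open_onto_image induced_aut.
Proof.
move=> p F' E'.
exists ([seq c (e (inl x)) | x <- F'] ++ [seq c (e (inr a)) | a <- E']), [::].
move=> q [E _]; split=> [x Hx|a Ha].
- by apply: induced_aut_center_pt; apply: E; apply/lmem_cat; left; apply/lmem_map; exists x.
- by apply: induced_aut_center_dst; apply: E; apply/lmem_cat; right; apply/lmem_map; exists a.
Qed.

Lemma induced_aut_embedding : top_group_embedding induced_aut.
Proof.
split; [exact: induced_aut_hom | exact: induced_aut_inj | exact: induced_aut_cont |].
exact: induced_aut_open.
Qed.

End Embedding.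
End Spread.

Theorem corollary4p13 (X : TSUM) (U : RUU) :
  countable_TSUM X ->
  exists Phi : dcAut X -> dcAut (RUU_TSUM U), top_group_embedding Phi.
Proof.
move=> [[eX eX_inj] [eD eD_inj]].
have [e e_inj] := inj_sum_nat eX_inj eD_inj.
have [c c_sep] := exists_unit_separated U.
pose ball_iso n h k := isometry_between (@ud U) (ball (c 0%N) 1) (ball (c n) 1) h k.
have [hh hh_iso] := choice (fun n h => exists k, ball_iso n h k)
  (fun n => balls_isometric (c 0%N) (c n) ltr01).
have [kk hk_iso] := choice (fun n => ball_iso n (hh n)) hh_iso.
exists (induced_aut c_sep hk_iso e_inj); exact: induced_aut_embedding.
Qed.
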